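(* There is a function $f(\Delta)=O(\Delta^{4/3})$ (as $\Delta\to\infty$) such that every graph $G$ with maximum degree $\Delta\ge 3$ satisfies $\pi'_l(G)\le \Delta^2 + 2^{4/3}\Delta^{5/3} + f(\Delta)$.
   Context: An edge-coloring is non-repetitive if for every path with an even number $2j$ of edges $e_1,\dots,e_{2j}$ (in order along the path), the color sequence $(c(e_1),\dots,c(e_j))$ differs from $(c(e_{j+1}),\dots,c(e_{2j}))$. $\pi'_l(G)$, the Thue choice index, is the minimum $k$ such that for every assignment of lists of size at least $k$ to the edges, $G$ has a non-repetitive edge-coloring in which every edge receives a color from its list. *)

From mathcomp Require Import all_boot.
From Stdlib Require Import Reals.

Set Implicit Arguments.
Unset Strict Implicit.
Unset Printing Implicit Defensive.

Definition simple_graph (T : finType) (e : rel T) : Prop :=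
  symmetric e /\ irreflexive e.

Definition maxdeg (T : finType) (e : rel T) : nat :=
  \max_(x : T) #|[set y | e x y]|.

(* Edges are represented as the 2-element vertex sets {x,y} with e x y. *)
Definition is_edge (T : finType) (e : rel T) (E : {set T}) : Prop :=
  exists x y, e x y /\ E = [set x; y].

Definition path_colors (T : finType) (c : {set T} -> nat) (x : T) (s : seq T)
  : seq nat := pairmap (fun u v => c [set u; v]) x s.

Definition nonrepetitive (T : finType) (e : rel T) (c : {set T} -> nat) : Prop :=
  forall (x : T) (s : seq T) (j : nat),
    path e x s -> uniq (x :: s) -> size s = (2 * j)%N -> (0 < j)%N ->
    take j (path_colors c x s) != drop j (path_colors c x s).

Definition thue_edge_choosable (T : finType) (e : rel T) (k : nat) : Prop :=
  forall L : {set T} -> seq nat,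
    (forall E, is_edge e E -> (k <= size (undup (L E)))%N) ->
    exists c : {set T} -> nat,
      (forall E, is_edge e E -> c E \in L E) /\ nonrepetitive e c.

(* pi'_l(G) <= b, i.e. the minimum k for which G is Thue k-choosable is <= b,
   unfolded as: some such k is <= b. *)
Definition thue_choice_index_le (T : finType) (e : rel T) (b : R) : Prop :=
  exists k : nat, thue_edge_choosable e k /\ (INR k <= b)%R.

Definition bigO_4_3 (f : nat -> R) : Prop :=
  exists (C : R) (N : nat), forall D : nat, (N <= D)%N ->
    (Rabs (f D) <= C * Rpower (INR D) (4/3))%R.

From mathcomp Require Import all_boot.
From Stdlib Require Import Reals ClassicalEpsilon Lra Psatz.
(* [ssrnat] again after [Reals], which rebinds the arithmetic notations of nat_scope. *)
From mathcomp Require Import zify ssrnat.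

Set Implicit Arguments.
Unset Strict Implicit.
Unset Printing Implicit Defensive.

(* A counting argument in the style of Rosenfeld. For a set S of edges let C(S) be the
   number of list colourings of S that are non-repetitive on the paths inside S, and let
   b = D^2 + a where D is the maximum degree. By induction on S one proves the stronger
   statement b^|X| C(S \ X) <= C(S) for X included in S, the key step being
   C(S + E) >= b C(S). Of the k C(S) ways to extend a colouring of S to a new edge E, a bad
   one has a repetitive path of length 2j through E, with E in its first half after
   reversing the path if needed. There are at most 2 j D^(2j-1) such paths, and a colouring
   repetitive on a given one is determined by its restriction to S minus the other j-1
   first-half edges, so there are at most b^(1-j) C(S) of them. Since
   sum_j j (D^2/b)^(j-1) <= (b/a)^2, at most K C(S) extensions are bad when
   2 D b^2 <= K a^2, and k >= b + K suffices. *)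

Definition asbool (P : Prop) : bool :=
  if excluded_middle_informative P then true else false.

Lemma asboolP (P : Prop) : reflect P (asbool P).
Proof. by rewrite /asbool; case: excluded_middle_informative => h; constructor. Qed.

Lemma size_flatten_map_le (A : eqType) (B : Type) (f : A -> seq B) (s : seq A) m :
  (forall x, x \in s -> size (f x) <= m) -> size (flatten (map f s)) <= size s * m.
Proof.
elim: s => //= x s IH H.
rewrite size_cat mulSn leq_add ?H ?mem_head //.
by apply: IH => y ys; apply: H; rewrite inE ys orbT.
Qed.

Lemma sum_le_size_mul (I : Type) (r : seq I) (f : I -> nat) m :
  (forall i, f i <= m) -> \sum_(i <- r) f i <= size r * m.
Proof.
by move=> H; elim: r => [|i r IH]; rewrite ?big_nil // big_cons mulSn leq_add.
Qed.

Lemma card_le_sum_cover (I : eqType) (U : finType) (r : seq I) (F : I -> {set U})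
    (A : {set U}) :
  (forall x, x \in A -> exists2 i, i \in r & x \in F i) ->
  #|A| <= \sum_(i <- r) #|F i|.
Proof.
elim: r A => [|i r IH] A cover.
  rewrite big_nil leqn0 cards_eq0; apply/eqP/setP => x; rewrite inE.
  by apply/negP => /cover [].
rewrite big_cons -(cardsID (F i) A); apply: leq_add.
  by apply/subset_leq_card/subsetIr.
apply: IH => x; rewrite inE => /andP [xFi /cover [i']].
by rewrite inE => /orP [/eqP -> | ir' xFi']; [rewrite (negbTE xFi) | exists i'].
Qed.

Lemma nth_take_drop_eq (A : Type) (x0 : A) (c : seq A) j i :
  take j c = drop j c -> i < j -> nth x0 c i = nth x0 c (j + i).
Proof. by move=> tdc ij; rewrite -nth_drop -tdc nth_take. Qed.

Lemma take_drop_rev_eq (A : eqType) (c : seq A) j : size c = 2 * j ->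
  (take j (rev c) == drop j (rev c)) = (take j c == drop j c).
Proof.
move=> sz; rewrite take_rev drop_rev sz (_ : 2 * j - j = j); last by lia.
by rewrite (inj_eq (can_inj (@revK _))) eq_sym.
Qed.

Lemma mem_take_nth (A : eqType) (x0 : A) (p : seq A) j y : y \in take j p ->
  exists2 i, i < j & nth x0 p i = y.
Proof.
move=> yt; have ij : index y (take j p) < j.
  by apply: leq_trans (geq_minl j (size p)); rewrite -size_take_min index_mem.
by exists (index y (take j p)); rewrite // -(nth_take _ ij) nth_index.
Qed.

Lemma set2_eq_cases (T : finType) (a b u v : T) : [set a; b] = [set u; v] ->
  (a = u /\ b = v) \/ (a = v /\ b = u).
Proof.
move=> eq_ab.
have /set2P ha : a \in [set u; v] by rewrite -eq_ab set21.
have /set2P hb : b \in [set u; v] by rewrite -eq_ab set22.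
have /set2P hu : u \in [set a; b] by rewrite eq_ab set21.
have /set2P hv : v \in [set a; b] by rewrite eq_ab set22.
intuition congruence.
Qed.

(* [deriv_geom_sum d b J = \sum_(1 <= j <= J) j * d ^ (j - 1) * b ^ (J - j)]. *)
Fixpoint deriv_geom_sum (d b J : nat) : nat :=
  if J is J'.+1 then b * deriv_geom_sum d b J' + J * d ^ J' else 0.

Lemma deriv_geom_sum_eq d a J :
  a ^ 2 * deriv_geom_sum d (d + a) J + J.+1 * d ^ J * (d + a)
  = (d + a) ^ J.+1 + J * d ^ J.+1.
Proof.
elim: J => [|J IH] /=; first by rewrite !expn0 !expn1; lia.
rewrite !expnS in IH *.
set P := d ^ J in IH *; set Q := (d + a) ^ J in IH *.
set S := deriv_geom_sum d (d + a) J in IH *.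
have := congr1 (muln (d + a)) IH; nia.
Qed.

Lemma deriv_geom_sum_le d a J : a ^ 2 * deriv_geom_sum d (d + a) J <= (d + a) ^ J.+1.
Proof.
have := deriv_geom_sum_eq d a J; rewrite (expnS d J).
set P := d ^ J; set S := deriv_geom_sum _ _ _; set Q := (d + a) ^ J.+1.
have : J * (d * P) <= J.+1 * P * (d + a) by nia.
lia.
Qed.

Lemma sum_le_deriv_geom_sum d b J Y (z : nat -> nat) :
  (forall j, 0 < j <= J -> b ^ j.-1 * z j <= j * d ^ j.-1 * Y) ->
  b ^ J.-1 * \sum_(1 <= j < J.+1) z j <= deriv_geom_sum d b J * Y.
Proof.
elim: J => [|J IH] zY; first by rewrite big_geq.
rewrite big_nat_recr //= mulnDr mulnDl.
apply: leq_add; last by rewrite zY ?ltnSn.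
case: J IH zY => [|J] IH zY; first by rewrite big_geq.
rewrite expnS -mulnA -mulnA leq_mul2l IH ?orbT // => j /andP [j0 jJ].
by apply: zY; rewrite j0 ltnW.
Qed.

Lemma weighted_sum_le d a J Y (z : nat -> nat) :
  (forall j, 0 < j <= J -> (d + a) ^ j.-1 * z j <= j * d ^ j.-1 * Y) ->
  a ^ 2 * \sum_(1 <= j < J.+1) z j <= (d + a) ^ 2 * Y.
Proof.
move=> zY; case: J zY => [|J] zY; first by rewrite big_geq ?muln0.
have [da0 | da_gt0] := posnP (d + a).
  by move: da0 => /eqP; rewrite addn_eq0 => /andP [_ /eqP ->]; rewrite expnS mul0n.
have daJ_gt0 : 0 < (d + a) ^ J by rewrite expn_gt0 da_gt0.
rewrite -(leq_pmul2l daJ_gt0) mulnCA.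
apply: leq_trans (_ : a ^ 2 * (deriv_geom_sum d (d + a) J.+1 * Y) <= _).
  by rewrite leq_mul2l sum_le_deriv_geom_sum ?orbT.
by rewrite mulnA mulnA -expnD addn2 leq_mul2r deriv_geom_sum_le orbT.
Qed.

(** * Paths and walks *)

Section PathEdges.
Variables (T : finType) (e : rel T).

Definition path_edges (x : T) (s : seq T) : seq {set T} :=
  pairmap (fun u v => [set u; v]) x s.

Lemma path_colorsE (c : {set T} -> nat) x s :
  path_colors c x s = map c (path_edges x s).
Proof. by elim: s x => //= y s IH x; rewrite IH. Qed.

Lemma size_path_edges x s : size (path_edges x s) = size s.
Proof. exact: size_pairmap. Qed.

Lemma path_edges_rev x s :
  path_edges (last x s) (rev (belast x s)) = rev (path_edges x s).
Proof.
elim: s x => //= y s IH x.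
rewrite rev_cons /path_edges -cats1 pairmap_cat /= -/(path_edges _ _) IH.
rewrite rev_cons -cats1; congr (_ ++ [:: _]).
have -> : last (last y s) (rev (belast y s)) = y.
  by case: s {IH} => //= z s; rewrite rev_cons last_rcons.
exact: setUC.
Qed.

Lemma path_edges_vertex x s F z :
  F \in path_edges x s -> z \in F -> z \in x :: s.
Proof.
elim: s x => //= y s IH x; rewrite inE => /orP [/eqP -> | Fs].
  by case/set2P=> ->; rewrite !inE eqxx ?orbT.
by move=> /(IH _ Fs); rewrite !inE => ->; rewrite orbT.
Qed.

Lemma uniq_path_edges x s : uniq (x :: s) -> uniq (path_edges x s).
Proof.
elim: s x => //= y s IH x /andP [xNys u]; rewrite IH // andbT.
apply/negP => /path_edges_vertex /(_ (set21 x y)).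
by apply/negP; move: xNys; rewrite inE.
Qed.

Lemma path_edges_is_edge x s F :
  path e x s -> F \in path_edges x s -> is_edge e F.
Proof.
elim: s x => //= y s IH x /andP [exy p]; rewrite inE => /orP [/eqP -> | Fs].
  by exists x, y.
exact: IH p Fs.
Qed.

Lemma path_edges_cat (x b : T) (t s : seq T) :
  path_edges x (t ++ b :: s) = path_edges x t ++ [set last x t; b] :: path_edges b s.
Proof. by rewrite /path_edges pairmap_cat. Qed.

Lemma path_rev_sym x s : symmetric e ->
  path e (last x s) (rev (belast x s)) = path e x s.
Proof. by move=> e_sym; rewrite rev_path; apply: eq_path => y z; apply: e_sym. Qed.

End PathEdges.

Section Walks.
Variables (T : finType) (e : rel T).

Fixpoint walks (n : nat) (x : T) : seq (seq T) :=
  if n is n'.+1 then [seq y :: w | y <- enum [set y | e x y], w <- walks n' y]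
  else [:: [::]].

Lemma mem_walks x s : path e x s -> s \in walks (size s) x.
Proof.
elim: s x => [|y s IH] x /=; first by rewrite inE.
by case/andP=> exy p; apply: allpairs_f_dep; rewrite ?mem_enum ?inE ?IH.
Qed.

Lemma size_walks n x : size (walks n x) <= maxdeg e ^ n.
Proof.
elim: n x => [|n IH] x //=; rewrite expnS.
apply: leq_trans (size_flatten_map_le (m := maxdeg e ^ n) _) _.
  by move=> y _; rewrite size_map IH.
rewrite leq_mul2r -cardE; apply/orP; right.
exact: (@leq_bigmax _ (fun x => #|[set y | e x y]|) x).
Qed.

(* The path that runs along [w1] backwards to [a], crosses to [b] and continues along [w2]. *)
Definition join_walks (a b : T) (w1 w2 : seq T) : T * seq T :=
  (last a w1, behead (rev (a :: w1)) ++ b :: w2).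

Definition first_half_paths (u v : T) (j : nat) : seq (T * seq T) :=
  flatten [seq flatten [seq [seq join_walks ab.1 ab.2 w1 w2 | w1 <- walks p ab.1,
                                   w2 <- walks (2 * j - p.+1) ab.2] | p <- iota 0 j]
          | ab <- [:: (u, v); (v, u)]].

Lemma size_first_half_paths u v j :
  size (first_half_paths u v j) <= 2 * (j * maxdeg e ^ (2 * j).-1).
Proof.
apply: size_flatten_map_le => ab _.
apply: leq_trans (size_flatten_map_le (m := maxdeg e ^ (2 * j).-1) _) _;
  last by rewrite size_iota.
move=> p; rewrite mem_iota => /andP [_ pj].
rewrite size_allpairs (_ : (2 * j).-1 = p + (2 * j - p.+1)); last by lia.
by rewrite expnD leq_mul ?size_walks.
Qed.

Lemma join_walks_split (x b : T) (t s : seq T) :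
  join_walks (last x t) b (rev (belast x t)) s = (x, t ++ b :: s).
Proof.
rewrite /join_walks rev_cons revK -lastI /=.
by case: t => //= y t; rewrite rev_cons last_rcons.
Qed.

Lemma first_half_pathsP u v j x s : symmetric e ->
  path e x s -> size s = 2 * j -> [set u; v] \in take j (path_edges x s) ->
  (x, s) \in first_half_paths u v j.
Proof.
move=> e_sym px sz uv_first.
have size_first : size (take j (path_edges x s)) = j.
  by rewrite size_takel // size_path_edges sz; lia.
set p := index [set u; v] (take j (path_edges x s)).
have pj : p < j by rewrite -[j in _ < j]size_first index_mem.
have Ep : nth set0 (path_edges x s) p = [set u; v] by rewrite -(nth_take _ pj) nth_index.
have ps : p < size s by lia.
set t := take p s; set b := nth x s p; set s2 := drop p.+1 s.
have def_s : s = t ++ b :: s2 by rewrite -drop_nth // cat_take_drop.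
have st : size t = p by rewrite size_takel //; lia.
have := Ep; rewrite def_s path_edges_cat nth_cat size_path_edges st ltnn subnn /=.
have := px; rewrite def_s cat_path /= => /and3P [pt _ ps2] ab_uv.
have w1 : rev (belast x t) \in walks p (last x t).
  by rewrite -st -(size_belast x) -size_rev mem_walks // path_rev_sym.
have w2 : s2 \in walks (2 * j - p.+1) b.
  by rewrite (_ : 2 * j - p.+1 = size s2) ?mem_walks // size_drop; lia.
have [ab ab_in ab_eq] : exists2 ab, ab \in [:: (u, v); (v, u)] & (last x t, b) = ab.
  case: (set2_eq_cases ab_uv) => -[-> ->];
    [exists (u, v) | exists (v, u)]; by rewrite ?inE ?eqxx ?orbT.
suff : join_walks (last x t) b (rev (belast x t)) s2 \in first_half_paths u v j.
  by rewrite join_walks_split.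
apply/flattenP; eexists; first exact: (map_f _ ab_in).
apply/flattenP; eexists.
  by apply: (map_f _ (_ : p \in iota 0 j)); rewrite mem_iota.
by rewrite -ab_eq; apply: allpairs_f.
Qed.

End Walks.

(** * Counting non-repetitive list colourings *)

Section ListColorings.
Variables (T : finType) (e : rel T).
Hypothesis e_sym : symmetric e.
Variables (L : {set T} -> seq nat) (k : nat).
Hypothesis L_size : forall F, is_edge e F -> k.+1 <= size (undup (L F)).

Local Notation coloring := {ffun {set T} -> 'I_k.+1}.

Definition edge_set : {set {set T}} :=
  [set F | [exists x, exists y, e x y && (F == [set x; y])]].

Lemma edge_setP F : reflect (is_edge e F) (F \in edge_set).
Proof.
rewrite inE; apply: (iffP existsP) => [[x /existsP [y /andP [xy /eqP ->]]] | [x [y [xy ->]]]].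
  by exists x, y.
by exists x; apply/existsP; exists y; rewrite xy eqxx.
Qed.

(* A colouring stores for each edge an index into its duplicate-free list, so distinct
   indices mean distinct colours. *)
Definition list_color (phi : coloring) (F : {set T}) : nat := nth 0 (undup (L F)) (phi F).

Definition colors_along (phi : coloring) (x : T) (s : seq T) : seq nat :=
  map (list_color phi) (path_edges x s).

Definition nonrep_on (S : {set {set T}}) (phi : coloring) : Prop :=
  forall x s j, path e x s -> uniq (x :: s) -> size s = 2 * j -> 0 < j ->
    {subset path_edges x s <= S} ->
    take j (colors_along phi x s) != drop j (colors_along phi x s).

Lemma nonrep_on_set0 phi : nonrep_on set0 phi.
Proof.
move=> x [|y s] j _ _ sz j0 sub; first by move: sz j0; case: j.
by have := sub _ (mem_head _ _); rewrite inE.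
Qed.

Lemma nonrep_on_sub (S S0 : {set {set T}}) (phi psi : coloring) :
  nonrep_on S phi -> S0 \subset S -> {in S0, phi =1 psi} -> nonrep_on S0 psi.
Proof.
move=> nr_phi /subsetP S0S phi_psi x s j px un sz j0 sub.
have -> : colors_along psi x s = colors_along phi x s.
  by apply/eq_in_map => F /sub F_S0; rewrite /list_color phi_psi.
by apply: nr_phi => // F /sub /S0S.
Qed.

Lemma list_color_inj phi psi F : is_edge e F ->
  list_color phi F = list_color psi F -> phi F = psi F.
Proof.
move=> eF /eqP; rewrite /list_color nth_uniq ?undup_uniq //.
- by move/eqP/val_inj.
- exact: leq_trans (ltn_ord _) (L_size eF).
- exact: leq_trans (ltn_ord _) (L_size eF).
Qed.

Lemma colors_along_rev phi x s :
  colors_along phi (last x s) (rev (belast x s)) = rev (colors_along phi x s).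
Proof. by rewrite /colors_along path_edges_rev map_rev. Qed.

Lemma nth_square_colors phi x s j i : size s = 2 * j -> i < j ->
  take j (colors_along phi x s) = drop j (colors_along phi x s) ->
  list_color phi (nth set0 (path_edges x s) i)
  = list_color phi (nth set0 (path_edges x s) (j + i)).
Proof.
move=> sz ij /(nth_take_drop_eq 0) /(_ ij).
by rewrite /colors_along !(nth_map set0) // size_path_edges sz; lia.
Qed.

(* Edges outside [S] carry the dummy index [0], so [colorings S] counts colourings of [S]. *)
Definition supported_on (S : {set {set T}}) (phi : coloring) : bool :=
  [forall F, (F \notin S) ==> (phi F == ord0)].

Definition colorings (S : {set {set T}}) : {set coloring} :=
  [set phi | supported_on S phi && asbool (nonrep_on S phi)].

Definition restrict (R : {set {set T}}) (phi : coloring) : coloring :=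
  [ffun F => if F \in R then phi F else ord0].

Lemma restrict_colorings (R S : {set {set T}}) (phi : coloring) :
  R \subset S -> nonrep_on S phi -> restrict R phi \in colorings R.
Proof.
move=> RS nr; rewrite inE; apply/andP; split.
  by apply/forallP => F; apply/implyP => /negbTE FR; rewrite ffunE FR.
by apply/asboolP; apply: (nonrep_on_sub nr RS) => F FR; rewrite ffunE FR.
Qed.

Section Growth.
Variables (a K : nat).
Local Notation D := (maxdeg e).
Local Notation b := (maxdeg e ^ 2 + a).
Hypotheses (a_gt0 : 0 < a) (K_bound : 2 * D * b ^ 2 <= K * a ^ 2) (k_bound : b + K <= k.+1).

Section AddEdge.
Variables (S : {set {set T}}) (u v : T).
Hypotheses (uv : e u v) (uvNS : [set u; v] \notin S).
Hypothesis card_colorings_setD :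
  forall X : {set {set T}}, X \subset S -> b ^ #|X| * #|colorings (S :\: X)| <= #|colorings S|.

Local Notation E := [set u; v].
Local Notation S1 := (E |: S).

Definition extensions : {set coloring} :=
  [set phi | supported_on S1 phi && asbool (nonrep_on S phi)].

Definition extend (psi : coloring) (i : 'I_k.+1) : coloring :=
  [ffun F => if F == E then i else psi F].

Lemma card_extensions : k.+1 * #|colorings S| <= #|extensions|.
Proof.
have extend_inj :
    {in setX (colorings S) [set: 'I_k.+1] &, injective (fun p => extend p.1 p.2)}.
  move=> [psi1 i1] [psi2 i2]; rewrite !inE /=.
  move=> /andP [/andP [sup1 _] _] /andP [/andP [sup2 _] _] eq12.
  have at_F F : extend psi1 i1 F = extend psi2 i2 F by rewrite eq12.
  have := at_F E; rewrite !ffunE eqxx => ->; congr pair; apply/ffunP => F.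
  case: (F =P E) => [-> | /eqP FNE]; last by have := at_F F; rewrite !ffunE (negbTE FNE).
  move/forallP: sup1 => /(_ E); move/forallP: sup2 => /(_ E).
  by rewrite uvNS /= => /eqP -> /eqP ->.
have := card_in_imset extend_inj; rewrite cardsX cardsT card_ord mulnC => <-.
apply/subset_leq_card/subsetP => _ /imsetP [[psi i] + ->].
rewrite !inE /= => /andP [/andP [sup /asboolP nr] _]; apply/andP; split.
  apply/forallP => F; apply/implyP; rewrite !inE negb_or => /andP [FNE FNS].
  by rewrite ffunE (negbTE FNE); move/forallP: sup => /(_ F); rewrite FNS.
apply/asboolP; apply: (nonrep_on_sub nr (subxx S)) => F FS.
by rewrite ffunE; case: (F =P E) => // FE; move: uvNS; rewrite -FE FS.
Qed.

Definition bad_extensions : {set coloring} :=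
  [set phi in extensions | ~~ asbool (nonrep_on S1 phi)].

Lemma card_extensions_split : #|extensions| = #|colorings S1| + #|bad_extensions|.
Proof.
rewrite -(cardsID [set phi | asbool (nonrep_on S1 phi)] extensions).
congr (_ + _); apply: eq_card => phi; rewrite !inE; last by rewrite andbC.
apply/idP/idP => [/andP [/andP [-> _] ->] // | /andP [-> nr]].
rewrite nr andbT; apply/asboolP; move/asboolP: nr => nr.
exact: nonrep_on_sub nr (subsetUr _ _) (fun _ _ => erefl).
Qed.

Definition repetitive_path (j : nat) (x : T) (s : seq T) : bool :=
  [&& path e x s, uniq (x :: s), size s == 2 * j, E \in take j (path_edges x s)
    & all (mem S1) (path_edges x s)].

Definition rep_colorings (j : nat) (V : T * seq T) : {set coloring} :=
  [set phi in extensions | repetitive_path j V.1 V.2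
     && (take j (colors_along phi V.1 V.2) == drop j (colors_along phi V.1 V.2))].

Definition first_half_rest (j : nat) (x : T) (s : seq T) : {set {set T}} :=
  [set F in take j (path_edges x s)] :\ E.

Lemma card_first_half_rest j x s :
  repetitive_path j x s -> #|first_half_rest j x s| = j.-1.
Proof.
case/and5P => _ un /eqP sz Et _.
have size_first : size (take j (path_edges x s)) = j.
  by rewrite size_takel // size_path_edges sz; lia.
have := cardsD1 E [set F in take j (path_edges x s)].
rewrite cardsE inE Et (card_uniqP _) ?take_uniq ?uniq_path_edges // size_first.
by move=> j_eq; rewrite [in RHS]j_eq.
Qed.

Lemma first_half_rest_sub j x s : repetitive_path j x s -> first_half_rest j x s \subset S.
Proof.
case/and5P => _ _ _ _ /allP S1_all; apply/subsetP => F; rewrite !inE => /andP [FNE Ft].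
by have := S1_all F (mem_take Ft); rewrite !inE (negbTE FNE).
Qed.

Lemma second_half_edge j x s i : repetitive_path j x s -> i < j ->
  nth set0 (path_edges x s) (j + i) \in S :\: first_half_rest j x s.
Proof.
case/and5P => _ un /eqP sz Et /allP S1_all ij.
set G := nth set0 _ _.
have G_second : G \in drop j (path_edges x s).
  by rewrite /G -nth_drop mem_nth // size_drop size_path_edges sz; lia.
have G_first : G \notin take j (path_edges x s).
  move: (uniq_path_edges un); rewrite -{1}(cat_take_drop j (path_edges x s)) cat_uniq.
  by case/and3P => _ /hasPn /(_ G G_second).
have GNE : G != E by apply: contraNneq G_first => ->.
have := S1_all G (mem_drop G_second).
by rewrite !inE (negbTE GNE) (negbTE G_first) /= => ->.
Qed.

Lemma rep_colorings_restrict_inj j x s : repetitive_path j x s ->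
  {in rep_colorings j (x, s) &, injective (restrict (S :\: first_half_rest j x s))}.
Proof.
move=> rep; have /and5P [px _ /eqP sz Et _] := rep; set R := S :\: _.
move=> phi1 phi2; rewrite !inE /= => /andP [/andP [sup1 _] /andP [_ /eqP sq1]].
move=> /andP [/andP [sup2 _] /andP [_ /eqP sq2]] eq12.
have agree_R : {in R, phi1 =1 phi2}.
  by move=> F FR; have := congr1 (fun phi : coloring => phi F) eq12; rewrite !ffunE FR.
apply/ffunP => F; have [FR | FNR] := boolP (F \in R); first exact: agree_R.
have [FS1 | FNS1] := boolP (F \in S1); last first.
  move/forallP: sup1 => /(_ F); move/forallP: sup2 => /(_ F).
  by rewrite FNS1 /= => /eqP -> /eqP ->.
have Ft : F \in take j (path_edges x s).
  case: (F =P E) => [-> // | /eqP FNE].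
  by move: FNR FS1; rewrite !inE (negbTE FNE) /= => + FS; rewrite FS andbT negbK.
have [i ij Fi] := mem_take_nth set0 Ft.
apply: list_color_inj (path_edges_is_edge px (mem_take Ft)) _.
rewrite -Fi (nth_square_colors sz ij sq1) (nth_square_colors sz ij sq2).
by rewrite /list_color (agree_R _ (second_half_edge rep ij)).
Qed.

Lemma card_rep_colorings j V : 0 < j -> b ^ j.-1 * #|rep_colorings j V| <= #|colorings S|.
Proof.
case: V => x s j0; have [rep | nrep] := boolP (repetitive_path j x s); last first.
  rewrite (_ : rep_colorings j (x, s) = set0) ?cards0 ?muln0 //.
  by apply/setP => phi; rewrite !inE (negbTE nrep) andbF.
rewrite -(card_first_half_rest rep).
apply: leq_trans (card_colorings_setD (first_half_rest_sub rep)); rewrite leq_mul2l.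
rewrite -(card_in_imset (rep_colorings_restrict_inj rep)); apply/orP; right.
apply/subset_leq_card/subsetP => _ /imsetP [phi phi_rep ->].
rewrite !inE in phi_rep; case/andP: phi_rep => /andP [_ /asboolP nr] _.
exact: restrict_colorings (subsetDl S _) nr.
Qed.

Definition bad_at (j : nat) : {set coloring} :=
  [set phi | has (fun V => phi \in rep_colorings j V) (first_half_paths e u v j)].

Lemma square_path_bad_at phi x s j :
  phi \in extensions -> path e x s -> uniq (x :: s) -> size s = 2 * j ->
  {subset path_edges x s <= S1} -> E \in path_edges x s ->
  take j (colors_along phi x s) = drop j (colors_along phi x s) -> phi \in bad_at j.
Proof.
move=> ext px un sz sub E_path sq; rewrite inE; apply/hasP.
have [Et | ENt] := boolP (E \in take j (path_edges x s)).
  exists (x, s); first exact: first_half_pathsP.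
  by rewrite inE ext /= sq eqxx andbT /repetitive_path px un sz eqxx Et; apply/allP.
have E_second : E \in drop j (path_edges x s).
  by move: E_path; rewrite -{1}(cat_take_drop j (path_edges x s)) mem_cat (negbTE ENt).
have E_first_rev : E \in take j (path_edges (last x s) (rev (belast x s))).
  rewrite path_edges_rev take_rev size_path_edges sz (_ : 2 * j - j = j) ?mem_rev //.
  by lia.
exists (last x s, rev (belast x s)).
  by apply: first_half_pathsP; rewrite ?path_rev_sym ?size_rev ?size_belast.
rewrite inE ext /= colors_along_rev take_drop_rev_eq ?size_map ?size_path_edges //.
rewrite sq eqxx andbT.
rewrite /repetitive_path path_rev_sym // px -rev_rcons -lastI rev_uniq un.
rewrite size_rev size_belast sz eqxx E_first_rev path_edges_rev all_rev /=.
exact/allP.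
Qed.

Lemma bad_extensions_cover phi :
  phi \in bad_extensions -> has (fun j => phi \in bad_at j) (index_iota 1 #|T|.+1).
Proof.
rewrite inE => /andP [ext]; apply: contraNT => Nbad.
apply/asboolP => x s j px un sz j0 sub; apply: contra Nbad => /eqP sq.
have nr : nonrep_on S phi by move: ext; rewrite inE => /andP [_ /asboolP].
have E_path : E \in path_edges x s.
  apply/negPn/negP => ENpath.
  suff sub_S : {subset path_edges x s <= S}.
    by have := nr x s j px un sz j0 sub_S; rewrite sq eqxx.
  move=> F FP; have := sub F FP; rewrite !inE => /orP [/eqP FE | //].
  by move: ENpath; rewrite -FE FP.
have jT : j <= #|T|.
  have := max_card (mem (x :: s)); rewrite (card_uniqP un) /= sz; lia.
apply/hasP; exists j; first by rewrite mem_index_iota j0 ltnS.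
exact: (square_path_bad_at ext px un sz sub E_path sq).
Qed.

Lemma card_bad_at j : 0 < j <= #|T| ->
  b ^ j.-1 * #|bad_at j| <= j * (D ^ 2) ^ j.-1 * (2 * D * #|colorings S|).
Proof.
case/andP => j0 _; set Y := #|colorings S|.
apply: leq_trans (_ : b ^ j.-1 * \sum_(V <- first_half_paths e u v j)
                          #|rep_colorings j V| <= _).
  rewrite leq_mul2l; apply/orP; right; apply: card_le_sum_cover => phi.
  by rewrite inE => /hasP [V]; exists V.
rewrite big_distrr /=; apply: leq_trans (sum_le_size_mul _ (m := Y) _) _.
  by move=> V; apply: card_rep_colorings.
apply: leq_trans (leq_mul (size_first_half_paths e u v j) (leqnn Y)) _.
rewrite (_ : (2 * j).-1 = (2 * j.-1).+1); last by lia.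
rewrite expnS -expnM (mulnC 2 j.-1); set P := (D ^ 2) ^ j.-1.
by apply: eq_leq; lia.
Qed.

Lemma card_bad_extensions : #|bad_extensions| <= K * #|colorings S|.
Proof.
set Y := #|colorings S|.
have a2_gt0 : 0 < a ^ 2 by rewrite expn_gt0 a_gt0.
rewrite -(leq_pmul2l a2_gt0); apply: leq_trans (_ : a ^ 2 *
    \sum_(1 <= j < #|T|.+1) #|bad_at j| <= _).
  rewrite leq_mul2l; apply/orP; right; apply: card_le_sum_cover => phi.
  by move/bad_extensions_cover/hasP => [j]; exists j.
apply: leq_trans (weighted_sum_le card_bad_at) _.
have := leq_mul K_bound (leqnn Y).
set B := (D ^ 2 + a) ^ 2; set A := a ^ 2; lia.
Qed.

Lemma card_colorings_setU1 : b * #|colorings S| <= #|colorings S1|.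
Proof.
have := card_extensions; rewrite card_extensions_split.
have := card_bad_extensions; have := k_bound.
set Y := #|colorings S|; set Z := #|colorings S1|; set W := #|bad_extensions|.
nia.
Qed.

End AddEdge.

Lemma card_colorings_setD (S X : {set {set T}}) : S \subset edge_set -> X \subset S ->
  b ^ #|X| * #|colorings (S :\: X)| <= #|colorings S|.
Proof.
have [n] := ubnP #|S|; elim: n S X => // n IH S X /ltnSE S_n S_edges XS.
have [-> | [E EX]] := set_0Vmem X; first by rewrite cards0 mul1n setD0.
have ES : E \in S := subsetP XS E EX.
have [u [v [uv def_E]]] : is_edge e E by apply/edge_setP; apply: (subsetP S_edges).
have IH' : forall X' : {set {set T}}, X' \subset S :\ E ->
    b ^ #|X'| * #|colorings ((S :\ E) :\: X')| <= #|colorings (S :\ E)|.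
  move=> X' X'S; apply: IH X'S; last by apply: subset_trans S_edges; apply: subsetDl.
  by apply: leq_trans S_n; rewrite (cardsD1 E S) ES.
have uvNS : [set u; v] \notin S :\ E by rewrite -def_E setD11.
have grow := card_colorings_setU1 uv uvNS IH'; rewrite -def_E setD1K // in grow.
have XS' : X :\ E \subset S :\ E by apply: setSD.
rewrite (cardsD1 E X) EX add1n expnS -mulnA; apply: leq_trans grow; rewrite leq_mul2l.
apply/orP; right; apply: leq_trans (IH' _ XS'); apply: eq_leq; congr (_ * #|colorings _|).
by apply/setP => F; rewrite !inE; case: (F =P E) => // ->; rewrite EX.
Qed.

Lemma exists_nonrep_list_coloring : exists c : {set T} -> nat,
  (forall F, is_edge e F -> c F \in L F) /\ nonrepetitive e c.
Proof.
have C0_gt0 : 0 < #|colorings set0|.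
  apply/card_gt0P; exists (restrict set0 [ffun=> ord0]).
  exact: restrict_colorings (subxx _) (nonrep_on_set0 _).
have := card_colorings_setD (subxx edge_set) (subxx edge_set); rewrite setDv.
have bE_gt0 : 0 < b ^ #|edge_set| * #|colorings set0|.
  by rewrite muln_gt0 C0_gt0 andbT expn_gt0 addn_gt0 a_gt0 orbT.
move=> /(leq_trans bE_gt0) /card_gt0P [phi]; rewrite inE => /andP [_ /asboolP nr].
exists (list_color phi); split.
  move=> F eF; rewrite -mem_undup; apply: mem_nth.
  exact: leq_trans (ltn_ord _) (L_size eF).
move=> x s j px un sz j0; rewrite path_colorsE; apply: nr => // F FP.
by apply/edge_setP; apply: path_edges_is_edge px FP.
Qed.

End Growth.
End ListColorings.

Lemma thue_edge_choosable_of (T : finType) (e : rel T) (a K : nat) :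
  symmetric e -> 0 < a -> 2 * maxdeg e * (maxdeg e ^ 2 + a) ^ 2 <= K * a ^ 2 ->
  thue_edge_choosable e (maxdeg e ^ 2 + a + K).
Proof.
move=> e_sym a_gt0 K_bound L L_size.
have [k def_k] : exists k, maxdeg e ^ 2 + a + K = k.+1.
  by exists (maxdeg e ^ 2 + a + K).-1; rewrite prednK // !addn_gt0 a_gt0 orbT.
rewrite def_k in L_size.
by apply: (exists_nonrep_list_coloring e_sym L_size a_gt0 K_bound); rewrite -def_k.
Qed.

(** * Choice of the parameters *)

Fixpoint icbrt_rec (n D : nat) : nat :=
  if n is n'.+1 then (if n ^ 3 <= D then n else icbrt_rec n' D) else 0.

Definition icbrt (D : nat) : nat := icbrt_rec D D.

Lemma icbrt_rec_le n D : icbrt_rec n D ^ 3 <= D.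
Proof. by elim: n => //= n IH; case: ifP. Qed.

Lemma icbrt_rec_max n D m : m <= n -> m ^ 3 <= D -> m <= icbrt_rec n D.
Proof.
elim: n => [|n IH] /=; first by rewrite leqn0 => /eqP ->.
case: ifP => // h; rewrite leq_eqVlt => /orP [/eqP -> | mn]; first by rewrite h.
by move=> hm; apply: IH.
Qed.

Lemma icbrt_cube_le D : icbrt D ^ 3 <= D.
Proof. exact: icbrt_rec_le. Qed.

Lemma icbrt_succ_cube_gt D : D < (icbrt D).+1 ^ 3.
Proof.
rewrite ltnNge; apply/negP => le_D.
have : (icbrt D).+1 <= D.
  by apply: leq_trans le_D; rewrite -{1}(expn1 (icbrt D).+1) leq_pexp2l.
by move/icbrt_rec_max => /(_ _ le_D); rewrite ltnn.
Qed.

Lemma icbrt_gt0 D : 0 < D -> 0 < icbrt D.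
Proof. by move=> D_gt0; apply: (icbrt_rec_max (m := 1)). Qed.

Lemma expn_succ_le s n : 0 < s -> s.+1 ^ n.+1 <= s ^ n.+1 + 2 ^ n.+1 * s ^ n.
Proof.
move=> s_gt0; suff : s.+1 ^ n.+1 + s ^ n <= s ^ n.+1 + 2 ^ n.+1 * s ^ n.
  by apply: leq_trans; rewrite leq_addr.
elim: n => [|n IH]; first by rewrite !expn0 !expn1; lia.
rewrite (expnS s n) in IH; rewrite (expnS s.+1 n.+1) (expnS s n.+1) (expnS 2 n.+1) (expnS s n).
move: IH; set X := s ^ n; set Y := s.+1 ^ n.+1; set Z := 2 ^ n.+1.
have Z_gt0 : 0 < Z by rewrite expn_gt0.
clearbody X Y Z => IH; have := leq_mul (leqnn s.+1) IH.
have : Z * X + s * X <= s * Z * X + X.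
  by case: s s_gt0 {IH Y} => // s _; case: Z Z_gt0 => // z _; nia.
lia.
Qed.

Lemma succ_cube_poly_le s : 0 < s ->
  s.+1 ^ 3 * (s.+1 ^ 6 + 2 * s ^ 5) ^ 2 <= s ^ 15 + 2 ^ 16 * s ^ 14.
Proof.
move=> s_gt0; have t_le : s.+1 <= 2 * s by lia.
have t15 := expn_succ_le 14 s_gt0.
have t9 : s ^ 5 * s.+1 ^ 9 <= 2 ^ 9 * s ^ 14.
  rewrite (_ : 14 = 5 + 9) // expnD mulnCA leq_mul2l -expnMn leq_exp2r //.
  by rewrite t_le orbT.
have t3 : s ^ 10 * s.+1 ^ 3 <= 2 ^ 3 * s ^ 14.
  apply: leq_trans (_ : s ^ 10 * (2 * s) ^ 3 <= _).
    by rewrite leq_mul2l leq_exp2r // t_le orbT.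
  rewrite expnMn mulnCA -expnD leq_mul2l leq_pexp2l // orbT.
have expand : s.+1 ^ 3 * (s.+1 ^ 6 + 2 * s ^ 5) ^ 2
    = s.+1 ^ 15 + 4 * (s ^ 5 * s.+1 ^ 9) + 4 * (s ^ 10 * s.+1 ^ 3).
  rewrite (_ : 15 = 3 + 6 + 6) // (_ : 9 = 3 + 6) // (_ : 10 = 5 + 5) // !expnD.
  set Q3 := s.+1 ^ 3; set Q6 := s.+1 ^ 6; set S5 := s ^ 5; nia.
rewrite expand; move: t15 t9 t3.
set A := s.+1 ^ 15; set B := s ^ 15; set C := s ^ 14.
set X := s ^ 5 * _; set Y := s ^ 10 * _.
rewrite (_ : 2 ^ 16 = 2 ^ 7 * 2 ^ 9); last by rewrite -expnD.
set P := 2 ^ 9; lia.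
Qed.

(* With [s = icbrt D], [a = 2 s^5 ~ 2 D^(5/3)] and [K ~ s^5/2] satisfy
   [2 D (D^2 + a)^2 <= K a^2], and [a + K ~ (5/2) D^(5/3) <= 2^(4/3) D^(5/3)]. *)
Definition thue_a (D : nat) : nat := 2 * icbrt D ^ 5.
Definition thue_K (D : nat) : nat := (icbrt D ^ 5 + 2 ^ 16 * icbrt D ^ 4) %/ 2 + 1.
Definition thue_k (D : nat) : nat := D ^ 2 + thue_a D + thue_K D.

Lemma thue_a_gt0 D : 0 < D -> 0 < thue_a D.
Proof. by move=> D_gt0; rewrite /thue_a muln_gt0 expn_gt0 icbrt_gt0. Qed.

Lemma thue_K_bound D : 0 < D ->
  2 * D * (D ^ 2 + thue_a D) ^ 2 <= thue_K D * thue_a D ^ 2.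
Proof.
move=> D_gt0; have s_gt0 := icbrt_gt0 D_gt0; rewrite /thue_K /thue_a.
set s := icbrt D; set P := s ^ 5 + _.
have D_le : D <= s.+1 ^ 3 := ltnW (icbrt_succ_cube_gt D).
have main : D * (D ^ 2 + 2 * s ^ 5) ^ 2 <= s ^ 10 * P.
  apply: leq_trans (_ : s.+1 ^ 3 * (s.+1 ^ 6 + 2 * s ^ 5) ^ 2 <= _).
    apply: leq_mul => //.
    by rewrite leq_sqr leq_add2r (_ : 6 = 3 * 2) // expnM leq_sqr.
  apply: leq_trans (succ_cube_poly_le s_gt0) _; apply: eq_leq.
  by rewrite /P mulnDr mulnCA -!expnD.
rewrite expnMn -expnM /=.
have P_le : P <= 2 * (P %/ 2 + 1) by clearbody P; lia.
have := leq_mul (leqnn (s ^ 10)) P_le.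
move: main; set B := (D ^ 2 + _) ^ 2; set A := s ^ 10; set Q := P %/ 2.
lia.
Qed.

Lemma thue_k_le_nat D :
  2 * thue_k D <= 2 * D ^ 2 + 5 * icbrt D ^ 5 + 2 ^ 16 * icbrt D ^ 4 + 2.
Proof.
rewrite /thue_k /thue_a /thue_K.
set s5 := icbrt D ^ 5; set s4 := icbrt D ^ 4; lia.
Qed.

Lemma INR_expn m n : INR (m ^ n) = (INR m ^ n)%R.
Proof. by elim: n => [|n IH]; rewrite ?expn0 // expnS mult_INR IH. Qed.

Open Scope R_scope.

Lemma pow_le_Rpower (S d : R) (n : nat) : 0 < S -> S ^ 3 <= d ->
  S ^ n <= Rpower d (INR n / 3).
Proof.
move=> S_gt0 S3d.
have -> : S ^ n = Rpower (S ^ 3) (INR n / 3).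
  rewrite -(@Rpower_pow 3 S S_gt0) Rpower_mult -(@Rpower_pow n S S_gt0).
  by congr (Rpower S _); rewrite (_ : INR 3 = 3); [field | simpl; lra].
apply: Rle_Rpower_l; first by apply: Rmult_le_pos; [exact: pos_INR | lra].
by split => //; apply: pow_lt.
Qed.

Lemma Rpower_2_4_3_ge : 5 / 2 <= Rpower 2 (4 / 3).
Proof.
set p := Rpower 2 (4 / 3); have p_gt0 : 0 < p by apply: exp_pos.
have : p ^ 3 = 16.
  rewrite /p -Rpower_pow // Rpower_mult (_ : 4 / 3 * INR 3 = INR 4).
    by rewrite Rpower_pow; [simpl; lra | lra].
  by simpl; field.
simpl; nra.
Qed.

Lemma thue_k_le (D : nat) : (0 < D)%N ->
  INR (thue_k D) <= INR D ^ 2 + Rpower 2 (4 / 3) * Rpower (INR D) (5 / 3)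
                    + (2 ^ 15 + 1) * Rpower (INR D) (4 / 3).
Proof.
move=> D_gt0.
(* Over fresh variables, so that [mult_INR] cannot unfold the powers [expn]. *)
have lin_INR k d2 s5 s4 c : (2 * k <= 2 * d2 + 5 * s5 + c * s4 + 2)%N ->
    2 * INR k <= 2 * INR d2 + 5 * INR s5 + INR c * INR s4 + 2.
  by move/leP/le_INR; rewrite !plus_INR !mult_INR /=; lra.
have := lin_INR _ _ _ _ _ (thue_k_le_nat D); rewrite !INR_expn => k_le.
set S := INR (icbrt D) in k_le *; set d := INR D in k_le *.
have S_ge1 : 1 <= S by apply: (le_INR 1); apply/leP/icbrt_gt0.
have S3 : S ^ 3 <= d by rewrite /S /d -INR_expn; apply/le_INR/leP/icbrt_cube_le.
have S_gt0 : 0 < S by lra.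
have S5 := pow_le_Rpower 5 S_gt0 S3; have S4 := pow_le_Rpower 4 S_gt0 S3.
rewrite (_ : INR 5 / 3 = 5 / 3) in S5; last by simpl; field.
rewrite (_ : INR 4 / 3 = 4 / 3) in S4; last by simpl; field.
set x5 := Rpower d (5 / 3) in S5 *; set x4 := Rpower d (4 / 3) in S4 *.
have x4_ge1 : 1 <= x4.
  have <- : Rpower 1 (4 / 3) = 1 by rewrite /Rpower ln_1 Rmult_0_r exp_0.
  by apply: Rle_Rpower_l; [lra | split; [lra | apply: (le_INR 1); apply/leP]].
have x5_coef : 5 / 2 * x5 <= Rpower 2 (4 / 3) * x5.
  by apply: Rmult_le_compat_r; [exact: Rlt_le (exp_pos _) | exact: Rpower_2_4_3_ge].
have x4_coef : INR 2 ^ 16 * S ^ 4 <= 2 * 2 ^ 15 * x4.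
  rewrite (_ : INR 2 = 2); last by simpl; lra.
  rewrite -tech_pow_Rmult; apply: Rmult_le_compat_l S4.
  by apply: Rmult_le_pos; [lra | apply: pow_le; lra].
lra.
Qed.

Close Scope R_scope.

Theorem theorem6 :
  exists f : nat -> R, bigO_4_3 f /\
    forall (T : finType) (e : rel T), simple_graph e ->
      (3 <= maxdeg e)%N ->
      thue_choice_index_le e
        (INR (maxdeg e) ^ 2 + Rpower 2 (4/3) * Rpower (INR (maxdeg e)) (5/3)
         + f (maxdeg e))%R.
Proof.
exists (fun D => (2 ^ 15 + 1) * Rpower (INR D) (4 / 3))%R; split.
  exists (2 ^ 15 + 1)%R, 0%N => D _; rewrite Rabs_pos_eq; first exact: Rle_refl.
  apply: Rmult_le_pos; last exact: Rlt_le (exp_pos _).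
  by apply: Rplus_le_le_0_compat; [apply: pow_le|]; lra.
move=> T e [e_sym _] D_ge3; have D_gt0 : (0 < maxdeg e)%N by apply: leq_trans D_ge3.
exists (thue_k (maxdeg e)); split; last exact: thue_k_le.
exact: thue_edge_choosable_of e_sym (thue_a_gt0 D_gt0) (thue_K_bound D_gt0).
Qed.
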